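(* Let $G$ and $H$ be finite simple graphs. Two vertices $(g,h)$ and $(g',h')$ of $G\diamond H$ satisfy $N_{G\diamond H}[(g,h)]=N_{G\diamond H}[(g',h')]$ if and only if (i) $N_G[g]=N_G[g']$ and $N_H[h]=N_H[h']$, or (ii) $\{g,g'\}$ is a $\gamma_G$-pair and $\{h,h'\}$ is a $\gamma_H$-pair.
   Context: The modular product $G\diamond H$ has vertex set $V(G)\times V(H)$; distinct vertices $(g,h)$ and $(g',h')$ are adjacent iff ($g=g'$ and $hh'\in E(H)$), or ($gg'\in E(G)$ and $h=h'$), or ($gg'\in E(G)$ and $hh'\in E(H)$), or ($g\neq g'$, $h\neq h'$, $gg'\notin E(G)$ and $hh'\notin E(H)$). $N_X[v]$ denotes the closed neighborhood of $v$ in a graph $X$. A $\gamma_G$-pair is a set $\{g,g'\}$ of two distinct vertices of $G$ such that $N_G[g]\cap N_G[g']=\emptyset$ and $N_G[g]\cup N_G[g']=V(G)$ (i.e. the two closed neighborhoods partition $V(G)$). *)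

From mathcomp Require Import all_boot.
Set Implicit Arguments. Unset Strict Implicit. Unset Printing Implicit Defensive.

Definition simple_graph (T : finType) (e : rel T) : Prop :=
  symmetric e /\ irreflexive e.

Definition closed_nbhd (T : finType) (e : rel T) (v : T) : {set T} :=
  [set u | (u == v) || e v u].

Definition modular_rel (G H : finType) (eG : rel G) (eH : rel H) : rel (G * H) :=
  fun x y =>
    (x != y) &&
    [|| (x.1 == y.1) && eH x.2 y.2,
        eG x.1 y.1 && (x.2 == y.2),
        eG x.1 y.1 && eH x.2 y.2
      | [&& x.1 != y.1, x.2 != y.2, ~~ eG x.1 y.1 & ~~ eH x.2 y.2]].

Definition gamma_pair (T : finType) (e : rel T) (g g' : T) : Prop :=
  g != g' /\
  closed_nbhd e g :&: closed_nbhd e g' = set0 /\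
  closed_nbhd e g :|: closed_nbhd e g' = [set: T].

From mathcomp Require Import all_boot.
From Stdlib Require Import Setoid.
Set Implicit Arguments. Unset Strict Implicit. Unset Printing Implicit Defensive.

(* In G <> H, a vertex (x, y) is a closed neighbour of (g, h) exactly when
   x in N[g] and y in N[h] hold or fail together, so N[(g, h)] is the
   "xnor" of N[g] and N[h]. Comparing two such sets pointwise and taking the
   exclusive or of both sides shows that x in N[g] (+) x in N[g'] and
   y in N[h] (+) y in N[h'] are one and the same constant: either both pairs
   of neighbourhoods coincide, or both are complementary, which for closed
   neighbourhoods is the gamma-pair condition. *)

Definition xnor_set (X Y : finType) (A : {set X}) (B : {set Y}) : {set X * Y} :=
  [set z | (z.1 \in A) == (z.2 \in B)].

Lemma xnor_set_inj (X Y : finType) (x0 : X) (y0 : Y)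
    (A A' : {set X}) (B B' : {set Y}) :
  xnor_set A B = xnor_set A' B' <->
  (A = A' /\ B = B') \/ (A' = ~: A /\ B' = ~: B).
Proof.
split=> [/setP E | [[<- <-] | [-> ->]] //].
  have xorE x y : (x \in A) (+) (x \in A') = (y \in B) (+) (y \in B').
    move: (E (x, y)); rewrite !inE /=.
    by case: (x \in A); case: (x \in A'); case: (y \in B); case: (y \in B').
  pose c := (y0 \in B) (+) (y0 \in B').
  have EA x : (x \in A) (+) (x \in A') = c by rewrite (xorE x y0).
  have EB y : (y \in B) (+) (y \in B') = c by rewrite -(xorE x0 y) (xorE x0 y0).
  case: c in EA EB; [right | left]; split; apply/setP=> v; rewrite ?inE;
    by [move: (EA v); case: (v \in A); case: (v \in A')
       | move: (EB v); case: (v \in B); case: (v \in B')].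
apply/setP=> z; rewrite !inE.
by case: (z.1 \in A); case: (z.2 \in B).
Qed.

Lemma closed_nbhd_refl (T : finType) (e : rel T) (v : T) : v \in closed_nbhd e v.
Proof. by rewrite inE eqxx. Qed.

Lemma closed_nbhd_modular (G H : finType) (eG : rel G) (eH : rel H) :
  simple_graph eG -> simple_graph eH -> forall (g : G) (h : H),
  closed_nbhd (modular_rel eG eH) (g, h) =
  xnor_set (closed_nbhd eG g) (closed_nbhd eH h).
Proof.
move=> [_ irrG] [_ irrH] g h; apply/setP=> [[x y]].
rewrite /closed_nbhd /modular_rel !inE /=.
have [->|neq_xg] := eqVneq x g; have [->|neq_yh] := eqVneq y h.
all: rewrite ?xpair_eqE /= ?eqxx ?irrG ?irrH ?(eq_sym g) ?(eq_sym h).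
all: rewrite ?(negbTE neq_xg) ?(negbTE neq_yh) /=.
all: by case: (eG g x); case: (eH h y).
Qed.

Lemma gamma_pairE (T : finType) (e : rel T) (g g' : T) :
  gamma_pair e g g' <-> closed_nbhd e g' = ~: closed_nbhd e g.
Proof.
split=> [[_ [/setP capE /setP cupE]] | compl].
  apply/setP=> x; move: (capE x) (cupE x); rewrite in_setC in_setI in_setU in_set0 in_setT.
  by case: (x \in closed_nbhd e g); case: (x \in closed_nbhd e g').
split; last split.
- apply/eqP=> eq_gg'; move: (closed_nbhd_refl e g').
  by rewrite compl in_setC -eq_gg' closed_nbhd_refl.
- by rewrite compl setICr.
- by rewrite compl setUCr.
Qed.

Theorem mainTheorem2 (G H : finType) (eG : rel G) (eH : rel H)
  (hG : simple_graph eG) (hH : simple_graph eH) (g g' : G) (h h' : H) :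
  closed_nbhd (modular_rel eG eH) (g, h) = closed_nbhd (modular_rel eG eH) (g', h')
  <->
  ((closed_nbhd eG g = closed_nbhd eG g' /\ closed_nbhd eH h = closed_nbhd eH h')
   \/ (gamma_pair eG g g' /\ gamma_pair eH h h')).
Proof.
by rewrite !closed_nbhd_modular // (xnor_set_inj g h) !gamma_pairE.
Qed.
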